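(* Let $\mathbbm k_{\mathrm{loc}}:=\mathbb Z[z^{\pm1}]\big[\tfrac1{1-z^i}:i\in\mathbb Z\setminus\{0\}\big]$. The K-theoretic residue map $\rho_{\mathsf K}\colon\mathbbm k_{\mathrm{loc}}\to\mathbb Z$ (the $z^0$-coefficient of $f_+-f_-$, where $f_+$, $f_-$ are the Laurent expansions of $f$ at $z=0$ and $z=\infty$) vanishes on $\mathbb Z[z^{\pm1}]$ and satisfies, for all integers $n\ge1$, $k\ge0$ and $0\le a<n$, $$\rho\Big(\frac{z^{nk+a}}{(1-z^n)^{k+1}}\Big)=\begin{cases}1&k=a=0,\\0&\text{otherwise}.\end{cases}$$ Moreover, $\rho_{\mathsf K}$ is the unique $\mathbb Z$-linear map $\rho\colon\mathbbm k_{\mathrm{loc}}\to\mathbb Z$ which vanishes on $\mathbb Z[z^{\pm1}]$ and satisfies these identities.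
   Context: These identities arise as the normalization condition $\rho(e(z\otimes\mathcal L)^{-1})=1$ (with $e=\wedge^\bullet_{-1}$) for line bundles $\mathcal L$ on weighted projective spaces $\mathbb P(n,\dots,n)$; a residue map in this sense is what governs the passage from the vertex algebra to the Lie algebra. For $f\in\mathbbm k_{\mathrm{loc}}$ the expansions $f_+\in\mathbb Z(\!(z)\!)$ and $f_-\in\mathbb Z(\!(z^{-1})\!)$ are the usual Laurent expansions of the rational function $f$. *)

From HB Require Import structures.
From mathcomp Require Import all_boot all_order all_algebra fraction.
From Stdlib Require Import ClassicalEpsilon.
Set Implicit Arguments. Unset Strict Implicit. Unset Printing Implicit Defensive.
Import Order.TTheory GRing.Theory Num.Theory.
Local Open Scope ring_scope.

(* The field of rational functions Q(z) = Frac(Z[z]). *)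
Definition ratfun := {fraction {poly int}}.

Definition tofracP (p : {poly int}) : ratfun := FracField.tofrac p.

Definition zz : ratfun := tofracP 'X.

Definition laurent_poly (g : ratfun) : Prop :=
  exists (P : {poly int}) (m : int), g = tofracP P * zz ^ m.

Definition kloc (f : ratfun) : Prop :=
  exists (g : ratfun) (s : seq int),
    laurent_poly g /\ all (fun i => i != 0) s /\
    f = g * \prod_(i <- s) (1 - zz ^ i)^-1.

Definition pcoef (P : {poly int}) (n : int) : int :=
  match n with Posz m => P`_m | Negz _ => 0 end.

(* the formal product Q * a of the polynomial Q with the (two-sided)
   coefficient sequence a equals P, coefficientwise *)
Definition prod_eq (P Q : {poly int}) (a : int -> int) : Prop :=
  forall n : int, \sum_(i < size Q) Q`_i * a (n - (i : nat)%:Z) = pcoef P n.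

(* a is the Laurent expansion of f at z = 0, i.e. f_+ in Z((z)):
   coefficients vanish for n << 0 and Q * f_+ = P for some f = P/Q *)
Definition expansion0 (f : ratfun) (a : int -> int) : Prop :=
  (exists N : int, forall n : int, n < N -> a n = 0) /\
  exists P Q : {poly int}, Q != 0 /\ f = tofracP P / tofracP Q /\ prod_eq P Q a.

(* b is the Laurent expansion of f at z = infinity, i.e. f_- in Z((z^{-1})) *)
Definition expansionInf (f : ratfun) (b : int -> int) : Prop :=
  (exists N : int, forall n : int, N < n -> b n = 0) /\
  exists P Q : {poly int}, Q != 0 /\ f = tofracP P / tofracP Q /\ prod_eq P Q b.

Definition rhoK_spec (f : ratfun) (r : int) : Prop :=
  exists a b, expansion0 f a /\ expansionInf f b /\ r = a 0 - b 0.

Definition rhoK (f : ratfun) : int :=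
  epsilon (inhabits (0 : int)) (rhoK_spec f).

(* a map rho : k_loc -> Z (given on all of Q(z), only values on k_loc matter)
   is Z-linear on k_loc *)
Definition Zlinear_on_kloc (rho : ratfun -> int) : Prop :=
  (forall f g, kloc f -> kloc g -> rho (f + g) = rho f + rho g) /\
  (forall (c : int) f, kloc f -> rho (c%:~R * f) = c * rho f).

Definition vanishes_on_laurent (rho : ratfun -> int) : Prop :=
  forall g, laurent_poly g -> rho g = 0.

Definition residue_identities (rho : ratfun -> int) : Prop :=
  forall n k a : nat, (0 < n)%N -> (a < n)%N ->
    rho (zz ^+ (n * k + a) / (1 - zz ^+ n) ^+ k.+1) =
    (if (k == 0%N) && (a == 0%N) then 1 else 0).

(* The expansions of f = P / Q at 0 and at infinity exist as soon as the constant,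
   resp. leading, coefficient of Q is a unit up to a power of z: then Q is invertible
   in Z((z)), resp. Z((1/z)).  They are unique since a nonzero polynomial annihilates no
   nonzero series supported on a half-line.  Every f in k_loc can be written
   P z^m / (1 - z^N)^K, which gives the existence and Z-linearity of rho_K; the residue
   identities come from rho_K (P / D) = P(0) when D(0) = 1 and deg P < deg D.
   For uniqueness, let rho be Z-linear, zero on Z[z^{+-1}] and on the identities, and
   y := 1 - z^N.  By induction on K, rho (z^j / y^K) = 0: since
   z^(j+N) / y^(K+1) = z^j / y^(K+1) - z^j / y^K, the map j |-> rho (z^j / y^(K+1)) is
   N-periodic, and the identities make it vanish on the period NK <= j < NK + N. *)

From HB Require Import structures.
From mathcomp Require Import all_boot all_order all_algebra fraction.
From mathcomp Require Import zify ring.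
From Stdlib Require Import ClassicalEpsilon.
Set Implicit Arguments. Unset Strict Implicit. Unset Printing Implicit Defensive.
Import Order.TTheory GRing.Theory Num.Theory.
Local Open Scope ring_scope.

HB.instance Definition _ := GRing.RMorphism.copy tofracP (@FracField.tofrac _).

Lemma tofracP_eq0 (P : {poly int}) : (tofracP P == 0) = (P == 0).
Proof. exact: tofrac_eq0. Qed.

Lemma zz_neq0 : zz != 0.
Proof. by rewrite tofracP_eq0 polyX_eq0. Qed.

Lemma polyC_intr (c : int) : (c%:~R : {poly int}) = c%:P.
Proof. by rewrite -[c in RHS]intz rmorph_int. Qed.

Lemma tofracP_int (c : int) : tofracP c%:P = c%:~R.
Proof. by rewrite -polyC_intr rmorph_int. Qed.

Lemma one_subXn_neq0 (N : nat) : (0 < N)%N -> (1 - 'X^N : {poly int}) != 0.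
Proof.
move=> N_gt0; apply/eqP => /(congr1 (fun p : {poly int} => p`_0)).
by rewrite coefB coef1 coefXn coef0; case: N N_gt0.
Qed.

Lemma one_subzz_neq0 (N : nat) : (0 < N)%N -> 1 - zz ^+ N != 0.
Proof.
by move=> N_gt0; rewrite -rmorphXn -(rmorph1 tofracP) -rmorphB tofracP_eq0 one_subXn_neq0.
Qed.

Definition conv (Q : {poly int}) (a : int -> int) (n : int) : int :=
  \sum_(i < size Q) Q`_i * a (n - (i : nat)%:Z).

Lemma conv_widen (Q : {poly int}) (a : int -> int) (n : int) (m : nat) :
  (size Q <= m)%N -> conv Q a n = \sum_(i < m) Q`_i * a (n - (i : nat)%:Z).
Proof.
move=> le_Qm; rewrite /conv (big_ord_widen m (fun i : nat => Q`_i * a (n - i%:Z))) //.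
rewrite big_mkcond /=; apply: eq_bigr => i _.
by case: ltnP => // hi; rewrite nth_default // mul0r.
Qed.

Lemma convD (Q R : {poly int}) a n : conv (Q + R) a n = conv Q a n + conv R a n.
Proof.
pose m := maxn (size Q) (size R).
have le_QRm : (size (Q + R)%R <= m)%N by apply: leq_trans (size_polyD _ _) _.
rewrite !(@conv_widen _ _ _ m) ?leq_maxl ?leq_maxr // -big_split /=.
by apply: eq_bigr => i _; rewrite coefD mulrDl.
Qed.

Lemma convC (c : int) a n : conv c%:P a n = c * a n.
Proof.
rewrite (@conv_widen _ _ _ 1) ?size_polyC ?leq_b1 //.
by rewrite big_ord1 /= coefC subr0.
Qed.

Lemma convCM (c : int) (Q : {poly int}) a n : conv (c%:P * Q) a n = c * conv Q a n.
Proof.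
rewrite (@conv_widen _ _ _ (size Q)) ?mul_polyC ?size_scale_leq //.
by rewrite /conv mulr_sumr; apply: eq_bigr => i _; rewrite coefZ mulrA.
Qed.

Lemma convMX (Q : {poly int}) a n : conv (Q * 'X) a n = conv Q a (n - 1).
Proof.
rewrite (@conv_widen _ _ _ (size Q).+1); last first.
  by rewrite (leq_trans (size_polyMleq _ _)) // size_polyX addn2.
rewrite big_ord_recl coefMX eqxx mul0r add0r; apply: eq_bigr => i _.
by rewrite coefMX /= /bump /=; congr (_ * a _); lia.
Qed.

Lemma convM (Q R : {poly int}) a n : conv (Q * R) a n = conv Q (conv R a) n.
Proof.
elim/poly_ind: Q n => [|Q c IHQ] n; first by rewrite mul0r /conv size_poly0 !big_ord0.
by rewrite mulrDl !convD convCM convC mulrAC !convMX IHQ.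
Qed.

Lemma convXnM (k : nat) (Q : {poly int}) a n :
  conv ('X^k * Q) a n = conv Q a (n - k%:Z).
Proof.
elim: k n => [|k IHk] n; first by rewrite mul1r subr0.
by rewrite exprSr mulrAC convMX IHk; congr conv; lia.
Qed.

Lemma eq_conv (Q : {poly int}) (a b : int -> int) n :
  (forall m, a m = b m) -> conv Q a n = conv Q b n.
Proof. by move=> eq_ab; apply: eq_bigr => i _; rewrite eq_ab. Qed.

Lemma conv_seqD (Q : {poly int}) (a b : int -> int) n :
  conv Q (fun m => a m + b m) n = conv Q a n + conv Q b n.
Proof. by rewrite /conv -big_split; apply: eq_bigr => i _; rewrite mulrDr. Qed.

Lemma conv_seqB (Q : {poly int}) (a b : int -> int) n :
  conv Q (fun m => a m - b m) n = conv Q a n - conv Q b n.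
Proof. by rewrite /conv -sumrB; apply: eq_bigr => i _; rewrite mulrBr. Qed.

Lemma conv_seqZ (Q : {poly int}) (c : int) (a : int -> int) n :
  conv Q (fun m => c * a m) n = c * conv Q a n.
Proof. by rewrite /conv mulr_sumr; apply: eq_bigr => i _; rewrite mulrCA. Qed.

Lemma conv_shift (Q : {poly int}) (a : int -> int) (s n : int) :
  conv Q (fun m => a (m + s)) n = conv Q a (n + s).
Proof. by apply: eq_bigr => i _; congr (_ * a _); lia. Qed.

Lemma pcoef_lt0 (P : {poly int}) n : n < 0 -> pcoef P n = 0.
Proof. by case: n. Qed.

Lemma pcoef_ge_size (P : {poly int}) n : (size P)%:Z <= n -> pcoef P n = 0.
Proof. by case: n => //= m le_Pm; rewrite nth_default. Qed.

Lemma pcoefD (P R : {poly int}) n : pcoef (P + R) n = pcoef P n + pcoef R n.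
Proof. by case: n => m //=; rewrite coefD. Qed.

Lemma pcoefCM (c : int) (P : {poly int}) n : pcoef (c%:P * P) n = c * pcoef P n.
Proof. by case: n => m /=; rewrite ?coefCM ?mulr0. Qed.

Lemma pcoefMX (P : {poly int}) n : pcoef (P * 'X) n = pcoef P (n - 1).
Proof.
case: n => [[|m]|m]; first by rewrite /= coefMX.
  by rewrite /= coefMX /=; congr (P`_ _); lia.
by rewrite (_ : Negz m - 1 = Negz m.+1) //; lia.
Qed.

Lemma conv_pcoef (Q P : {poly int}) n : conv Q (pcoef P) n = pcoef (Q * P) n.
Proof.
elim/poly_ind: Q n => [|Q c IHQ] n.
  by rewrite mul0r /conv size_poly0 big_ord0; case: n => m; rewrite /= ?coef0.
by rewrite convD convC mulrDl pcoefD pcoefCM convMX IHQ mulrAC pcoefMX.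
Qed.

Lemma poly_mulXn_coef0 (R : nzRingType) (Q : {poly R}) :
  Q != 0 -> exists (v : nat) (Q' : {poly R}), Q = Q' * 'X^v /\ Q'`_0 != 0.
Proof.
move=> Q_neq0; have ex_v : exists v, Q`_v != 0.
  by exists (size Q).-1; rewrite -lead_coefE lead_coef_eq0.
case: (ex_minnP ex_v) => v Qv v_min; exists v, (drop_poly v Q).
rewrite coef_drop_poly add0n; split=> //.
rewrite -{1}(poly_take_drop v Q) [take_poly v Q](_ : _ = 0) ?add0r //.
apply/polyP => i; rewrite coef_take_poly coef0; case: ltnP => // lt_iv.
by apply/eqP/negPn/negP => /v_min; rewrite leqNgt lt_iv.
Qed.

Lemma conv_lbounded_eq0_coef0 (Q : {poly int}) (d : int -> int) (N : int) :
  Q`_0 != 0 -> (forall n, n < N -> d n = 0) -> (forall n, conv Q d n = 0) ->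
  forall n, d n = 0.
Proof.
move=> Q0 dN Qd.
suff d_above (L : nat) : d (N + L%:Z) = 0.
  move=> n; case: (ltP n N) => [/dN // | le_Nn].
  by rewrite -(d_above `|n - N|%N); congr d; lia.
elim/ltn_ind: L => L IHL; have := Qd (N + L%:Z); rewrite /conv.
case sQ: (size Q) => [|s]; first by rewrite nth_default ?sQ ?eqxx in Q0.
rewrite big_ord_recl /= subr0 big1 ?addr0 => [/eqP | i _].
  by rewrite mulf_eq0 (negbTE Q0) => /eqP.
rewrite /bump leq0n add1n.
case: (ltP (N + L%:Z - i.+1%:Z) N) => [/dN -> | le_N]; first by rewrite mulr0.
have lt_L : (`|L%:Z - i.+1%:Z|%N < L)%N by lia.
by rewrite (_ : N + L%:Z - _ = N + `|L%:Z - i.+1%:Z|%N%:Z) ?IHL ?mulr0 //; lia.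
Qed.

Lemma conv_lbounded_eq0 (Q : {poly int}) (d : int -> int) (N : int) :
  Q != 0 -> (forall n, n < N -> d n = 0) -> (forall n, conv Q d n = 0) ->
  forall n, d n = 0.
Proof.
move=> /poly_mulXn_coef0 [v [Q' [-> Q'0]]] dN Qd.
apply: (conv_lbounded_eq0_coef0 Q'0 dN) => n.
by rewrite -(Qd (n + v%:Z)) mulrC convXnM; congr conv; lia.
Qed.

Lemma coef0_Poly_rev (R : nzSemiRingType) (Q : {poly R}) :
  (Poly (rev Q))`_0 = lead_coef Q.
Proof.
rewrite coef_Poly lead_coefE; case sQ: (size Q) => [|s].
  by rewrite !nth_default ?size_rev ?sQ.
by rewrite nth_rev ?sQ // subSS subn0.
Qed.

(* Reversing Q exchanges the expansions at zero and at infinity. *)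
Lemma conv_rev (Q : {poly int}) (a : int -> int) (c n : int) :
  conv (Poly (rev Q)) (fun m => a (c - m)) n = conv Q a (c + (size Q).-1%:Z - n).
Proof.
rewrite (@conv_widen _ _ _ (size Q)); last by rewrite (leq_trans (size_Poly _)) ?size_rev.
rewrite /conv (reindex_inj rev_ord_inj) /=; apply: eq_bigr => [[i lt_iQ]] _ /=.
rewrite coef_Poly nth_rev; last by rewrite ltn_subrL /= (leq_ltn_trans _ lt_iQ).
rewrite subnSK // subKn ?(ltnW lt_iQ) //; congr (_ * a _).
by move: lt_iQ; case: (size _) => // s lt_is; rewrite subSS; lia.
Qed.

Lemma conv_ubounded_eq0 (Q : {poly int}) (d : int -> int) (N : int) :
  Q != 0 -> (forall n, N < n -> d n = 0) -> (forall n, conv Q d n = 0) ->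
  forall n, d n = 0.
Proof.
move=> Q_neq0 dN Qd n; rewrite (_ : n = 0 - - n); last lia.
apply: (@conv_lbounded_eq0_coef0 (Poly (rev Q)) (fun m => d (0 - m)) (- N)) => [||m].
- by rewrite coef0_Poly_rev lead_coef_eq0.
- by move=> m lt_mN; apply: dN; lia.
- exact: (etrans (conv_rev _ _ _ _) (Qd _)).
Qed.

Lemma coefM_exp_coef0 (R : comNzRingType) (S T : {poly R}) (j m : nat) :
  T`_0 = 0 -> (m < j)%N -> (S * T ^+ j)`_m = 0.
Proof.
move=> T0 lt_mj; have -> : T = drop_poly 1 T * 'X^1.
  rewrite -{1}(poly_take_drop 1 T) [take_poly 1 T](_ : _ = 0) ?add0r //.
  by apply/polyP => -[|i]; rewrite coef_take_poly coef0.
by rewrite exprMn -exprM mulrA coefMXn mul1n lt_mj.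
Qed.

Lemma conv_coef (Q T : {poly int}) (a : int -> int) (n : nat) :
  (forall k, k < 0 -> a k = 0) -> (forall m : nat, (m <= n)%N -> a m = T`_m) ->
  conv Q a n = (Q * T)`_n.
Proof.
move=> a_neg a_T; rewrite (@conv_widen _ _ _ (size Q + n.+1)) ?leq_addr // coefM.
rewrite (big_ord_widen (size Q + n.+1) (fun j => Q`_j * T`_(n - j))) ?leq_addl //.
rewrite [RHS]big_mkcond /=; apply: eq_bigr => -[i lt_i] _ /=.
case: ltnP => [lt_in | le_ni]; last by rewrite a_neg ?mulr0 // subr_lt0 ltz_nat.
by rewrite subzn -1?ltnS // a_T // leq_subr.
Qed.

Lemma conv_lbounded_solution (Q P : {poly int}) : Q`_0 \is a GRing.unit ->
  exists a : int -> int, (forall n, n < 0 -> a n = 0) /\ forall n, conv Q a n = pcoef P n.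
Proof.
move=> Q0_unit; pose v := (Q`_0)^-1; pose T := 1 - v *: Q.
have T0 : T`_0 = 0 by rewrite coefB coef1 coefZ mulVr ?subrr.
(* the truncations [S m] of the geometric series of [T] invert [v *: Q] modulo ['X^m.+1] *)
pose S m := \sum_(j < m.+1) T ^+ j.
have vQS m : v *: Q * S m = 1 - T ^+ m.+1.
  have -> : v *: Q = 1 - T by rewrite opprB addrC subrK.
  by rewrite -opprB mulNr -subrX1 opprB.
have S_stable m M : (m <= M)%N -> (v *: P * S M)`_m = (v *: P * S m)`_m.
  elim: M => [|M IHM] le_mM; first by rewrite (_ : m = 0%N) //; lia.
  case: (ltngtP m M.+1) => [lt_mM | | -> //]; last lia.
  by rewrite /S big_ord_recr mulrDr coefD IHM // coefM_exp_coef0 ?addr0.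
pose a n := if n is Posz m then (v *: P * S m)`_m else 0.
have a_neg n : n < 0 -> a n = 0 by case: n.
exists a; split=> // -[m | m]; last first.
  by rewrite /conv big1 // => i _; rewrite a_neg ?mulr0 // NegzE; lia.
rewrite (@conv_coef _ (v *: P * S m)) //; last by move=> k le_km; rewrite S_stable.
rewrite (_ : Q * _ = P * (v *: Q * S m)); last by rewrite -!mul_polyC; ring.
by rewrite vQS mulrBr mulr1 coefB coefM_exp_coef0 ?subr0.
Qed.

Lemma pcoef_Poly_rev (P : {poly int}) n :
  pcoef (Poly (rev P)) ((size P)%:Z - 1 - n) = pcoef P n.
Proof.
case: n => [m | m]; last first.
  rewrite NegzE (_ : _ - _ = Posz (size P + m)) /=; last lia.
  by rewrite coef_Poly nth_default // size_rev leq_addr.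
case: (ltnP m (size P)) => [lt_mP | le_Pm].
  rewrite (_ : _ - _ = Posz (size P - m.+1)) /=; last by move: lt_mP; set s := size _; lia.
  rewrite coef_Poly nth_rev; last by rewrite ltn_subrL (leq_ltn_trans _ lt_mP).
  by rewrite subnSK ?subKn // ltnW.
rewrite (_ : _ - _ = Negz (m - size P)) /=; last by move: le_Pm; set s := size _; lia.
by rewrite nth_default.
Qed.

Lemma conv_ubounded_solution (Q P : {poly int}) : lead_coef Q \is a GRing.unit ->
  exists b : int -> int, (forall n, (size P)%:Z - (size Q)%:Z < n -> b n = 0) /\
    forall n, conv Q b n = pcoef P n.
Proof.
move=> lQ_unit; have Q_gt0 : (0 < size Q)%N.
  by rewrite size_poly_gt0; apply: contraTneq lQ_unit => ->; rewrite lead_coef0 unitr0.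
have Qr0_unit : (Poly (rev Q))`_0 \is a GRing.unit by rewrite coef0_Poly_rev.
have [c [c_neg Qc]] := conv_lbounded_solution (Poly (rev P)) Qr0_unit.
pose e := (size P)%:Z - (size Q)%:Z.
exists (fun m => c (e - m)); split=> [n lt_en | n]; first by apply: c_neg; rewrite subr_lt0.
rewrite -pcoef_Poly_rev -Qc.
transitivity (conv (Poly (rev Q)) (fun m => c (e - (e - m))) ((size P)%:Z - 1 - n)).
  by rewrite (conv_rev _ (fun m => c (e - m))); congr conv; move: Q_gt0; rewrite /e; lia.
by apply: eq_conv => m; congr c; lia.
Qed.

Lemma conv_lbounded_solutionXn (k : nat) (D P : {poly int}) : D`_0 \is a GRing.unit ->
  exists a : int -> int, (forall n, n < - k%:Z -> a n = 0) /\
    forall n, conv ('X^k * D) a n = pcoef P n.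
Proof.
move=> D0_unit; have [c [c_neg Dc]] := conv_lbounded_solution P D0_unit.
exists (fun m => c (m + k%:Z)); split=> [n lt_nk | n].
  by apply: c_neg; rewrite -ltrBrDr sub0r.
by rewrite convXnM conv_shift subrK.
Qed.

Definition represents (f : ratfun) (a : int -> int) : Prop :=
  exists P Q : {poly int},
    Q != 0 /\ f = tofracP P / tofracP Q /\ forall n, conv Q a n = pcoef P n.

Lemma eq_tofracP_div (P Q P' Q' : {poly int}) : Q != 0 -> Q' != 0 ->
  tofracP P / tofracP Q = tofracP P' / tofracP Q' -> Q' * P = Q * P'.
Proof.
move=> Q_neq0 Q'_neq0 /eqP; rewrite eqr_div ?tofracP_eq0 // -!rmorphM tofrac_eq.
by rewrite mulrC (mulrC Q) => /eqP.
Qed.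

Lemma represents_sub f a a' : represents f a -> represents f a' ->
  exists2 R : {poly int}, R != 0 & forall n, conv R (fun m => a m - a' m) n = 0.
Proof.
move=> [P [Q [Q_neq0 [-> Qa]]]] [P' [Q' [Q'_neq0 [ef Q'a']]]].
exists (Q' * Q); first by rewrite mulf_neq0.
move=> n; rewrite conv_seqB convM (eq_conv _ _ Qa) conv_pcoef.
rewrite [Q' * Q]mulrC convM (eq_conv _ _ Q'a') conv_pcoef.
by rewrite (eq_tofracP_div Q_neq0 Q'_neq0 ef) subrr.
Qed.

Lemma expansion0_unique f a a' : expansion0 f a -> expansion0 f a' -> a =1 a'.
Proof.
move=> [[N aN] rep_a] [[N' a'N] rep_a'] n; apply/eqP; rewrite -subr_eq0; apply/eqP.
have [R R_neq0 Rd] := represents_sub rep_a rep_a'.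
apply: (conv_lbounded_eq0 (N := Num.min N N') R_neq0 _ Rd) => m.
by rewrite lt_min => /andP [lt_mN lt_mN']; rewrite aN // a'N // subr0.
Qed.

Lemma expansionInf_unique f b b' : expansionInf f b -> expansionInf f b' -> b =1 b'.
Proof.
move=> [[N bN] rep_b] [[N' b'N] rep_b'] n; apply/eqP; rewrite -subr_eq0; apply/eqP.
have [R R_neq0 Rd] := represents_sub rep_b rep_b'.
apply: (conv_ubounded_eq0 (N := Num.max N N') R_neq0 _ Rd) => m.
by rewrite gt_max => /andP [lt_Nm lt_N'm]; rewrite bN // b'N // subr0.
Qed.

Lemma rhoK_spec_unique f r r' : rhoK_spec f r -> rhoK_spec f r' -> r = r'.
Proof.
move=> [a [b [fa [fb ->]]]] [a' [b' [fa' [fb' ->]]]].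
by rewrite (expansion0_unique fa fa') (expansionInf_unique fb fb').
Qed.

Lemma rhoK_specE f r : rhoK_spec f r -> rhoK f = r.
Proof.
move=> fr; apply: (rhoK_spec_unique _ fr).
exact: epsilon_spec (inhabits (0 : int)) (rhoK_spec f) (ex_intro _ r fr).
Qed.

Lemma represents_add f g a b : represents f a -> represents g b ->
  represents (f + g) (fun m => a m + b m).
Proof.
move=> [P [Q [Q_neq0 [-> Qa]]]] [P' [Q' [Q'_neq0 [-> Q'b]]]].
exists (P * Q' + P' * Q), (Q * Q'); split; first by rewrite mulf_neq0.
split; first by rewrite addf_div ?tofracP_eq0 // !rmorphD !rmorphM.
move=> n; rewrite conv_seqD {1}[Q * Q']mulrC !convM (eq_conv _ _ Qa) (eq_conv _ _ Q'b).
by rewrite !conv_pcoef pcoefD (mulrC Q') (mulrC Q).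
Qed.

Lemma represents_scale f a (c : int) : represents f a ->
  represents (c%:~R * f) (fun m => c * a m).
Proof.
move=> [P [Q [Q_neq0 [-> Qa]]]]; exists (c%:P * P), Q; split=> //.
split; first by rewrite mulrA -tofracP_int -rmorphM.
by move=> n; rewrite conv_seqZ Qa pcoefCM.
Qed.

Lemma rhoK_spec_add f g r s : rhoK_spec f r -> rhoK_spec g s -> rhoK_spec (f + g) (r + s).
Proof.
move=> [a [b [[[N aN] fa] [[[M bM] fb] ->]]]] [a' [b' [[[N' a'N] ga'] [[[M' b'M] gb'] ->]]]].
exists (fun m => a m + a' m), (fun m => b m + b' m); split; last split.
- split; last exact: represents_add.
  exists (Num.min N N') => n; rewrite lt_min => /andP [lt_nN lt_nN'].
  by rewrite aN // a'N // addr0.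
- split; last exact: represents_add.
  exists (Num.max M M') => n; rewrite gt_max => /andP [lt_Mn lt_M'n].
  by rewrite bM // b'M // addr0.
- by rewrite opprD addrACA.
Qed.

Lemma rhoK_spec_scale f r (c : int) : rhoK_spec f r -> rhoK_spec (c%:~R * f) (c * r).
Proof.
move=> [a [b [[[N aN] fa] [[[M bM] fb] ->]]]].
exists (fun m => c * a m), (fun m => c * b m); split; last split.
- by split; [exists N => n lt_nN; rewrite aN ?mulr0 | exact: represents_scale].
- by split; [exists M => n lt_Mn; rewrite bM ?mulr0 | exact: represents_scale].
- by rewrite mulrBr.
Qed.

Lemma rhoK_spec_exists (P D : {poly int}) (k : nat) :
  D`_0 \is a GRing.unit -> lead_coef D \is a GRing.unit ->
  exists r, rhoK_spec (tofracP P / tofracP ('X^k * D)) r.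
Proof.
move=> D0_unit lD_unit.
have lQ_unit : lead_coef ('X^k * D) \is a GRing.unit by rewrite lead_coefM lead_coefXn mul1r.
have Q_neq0 : 'X^k * D != 0 by rewrite -lead_coef_eq0; apply: contraTneq lQ_unit => ->.
have [a [aN Qa]] := conv_lbounded_solutionXn k P D0_unit.
have [b [bN Qb]] := conv_ubounded_solution P lQ_unit.
exists (a 0 - b 0), a, b; split; last split=> //.
- by split; [exists (- k%:Z) | exists P, ('X^k * D)].
- by split; [exists ((size P)%:Z - (size ('X^k * D))%:Z) | exists P, ('X^k * D)].
Qed.

Lemma rhoK_spec_proper (P D : {poly int}) :
  D`_0 = 1 -> lead_coef D \is a GRing.unit -> (size P < size D)%N ->
  rhoK_spec (tofracP P / tofracP D) P`_0.
Proof.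
move=> D0 lD_unit lt_PD.
have D_neq0 : D != 0 by rewrite -lead_coef_eq0; apply: contraTneq lD_unit => ->.
have [|a [a_neg Da]] := @conv_lbounded_solution D P; first by rewrite D0.
have [b [bN Db]] := conv_ubounded_solution P lD_unit.
have a0 : a 0 = P`_0.
  rewrite -[RHS]/(pcoef P 0) -Da (@conv_coef _ (a 0)%:P _ 0) //.
    by rewrite coefMC D0 mul1r.
  by case=> // _; rewrite coefC.
have b0 : b 0 = 0 by apply: bN; rewrite subr_lt0 ltz_nat.
exists a, b; split; last split; last by rewrite a0 b0 subr0.
- by split; [exists 0 | exists P, D].
- by split; [exists ((size P)%:Z - (size D)%:Z) | exists P, D].
Qed.

Lemma laurent_zz (m : int) : laurent_poly (zz ^ m).
Proof. by exists 1, m; rewrite rmorph1 mul1r. Qed.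

Lemma laurent_frac (P : {poly int}) (m : int) :
  exists (P' : {poly int}) (k : nat), tofracP P * zz ^ m = tofracP P' / tofracP 'X^k.
Proof.
case: m => j; last by exists P, j.+1; rewrite NegzE -exprnN rmorphXn.
by exists (P * 'X^j), 0%N; rewrite expr0 rmorph1 divr1 rmorphM -exprnP rmorphXn.
Qed.

Lemma rhoK_spec_laurent g : laurent_poly g -> rhoK_spec g 0.
Proof.
move=> [P [m ->]]; have [P' [k ->]] := laurent_frac P m.
pose a n := pcoef P' (n + k%:Z).
have Xk_neq0 : 'X^k != 0 :> {poly int} by rewrite monic_neq0 ?monicXn.
have Xka n : conv 'X^k a n = pcoef P' n.
  by rewrite -['X^k]mulr1 convXnM -polyC1 convC mul1r /a subrK.
exists a, a; split; last split; last by rewrite subrr.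
- split; last by exists P', 'X^k.
  by exists (- k%:Z) => n lt_nk; apply: pcoef_lt0; rewrite -ltrBrDr sub0r.
- split; last by exists P', 'X^k.
  by exists ((size P')%:Z - k%:Z) => n lt_n; apply: pcoef_ge_size; rewrite -lerBlDr ltW.
Qed.

Lemma invf_one_subV (K : fieldType) (w : K) :
  w != 0 -> w != 1 -> (1 - w^-1)^-1 = 1 - (1 - w)^-1.
Proof.
move=> w_neq0 w_neq1; have w1_neq0 : 1 - w != 0 by rewrite subr_eq0 eq_sym.
have -> : 1 - w^-1 = - (1 - w) / w by field.
by field; rewrite w_neq0 w1_neq0 oppr_eq0 w1_neq0.
Qed.

Lemma inv_one_sub_zzXn (j q : nat) : (0 < j * q)%N ->
  (1 - zz ^+ j)^-1 = tofracP (\sum_(t < q) 'X^j ^+ t) / (1 - zz ^+ (j * q)).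
Proof.
move=> jq_gt0; set G := \sum_(t < q) _.
have yG : 1 - zz ^+ (j * q) = (1 - zz ^+ j) * tofracP G.
  rewrite -!rmorphXn -(rmorph1 tofracP) -!rmorphB -rmorphM; congr tofracP.
  by rewrite exprM -opprB subrX1 -mulNr opprB.
have G_neq0 : tofracP G != 0.
  by apply: contra_neq (one_subzz_neq0 jq_gt0); rewrite yG => ->; rewrite mulr0.
by rewrite yG invfM mulrCA mulfV ?mulr1.
Qed.

Lemma inv_one_sub_zz (i : int) (N : nat) : i != 0 -> (0 < N)%N -> (`|i| %| N)%N ->
  exists F : {poly int}, (1 - zz ^ i)^-1 = tofracP F / (1 - zz ^+ N).
Proof.
move=> i_neq0 N_gt0 /dvdnP [q N_eq]; rewrite mulnC in N_eq; subst N.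
case: i i_neq0 N_gt0 => j j_neq0 /= jq_gt0.
  by exists (\sum_(t < q) 'X^j ^+ t); rewrite -exprnP (inv_one_sub_zzXn jq_gt0).
have [F eF] : exists F, (1 - zz ^+ j.+1)^-1 = tofracP F / (1 - zz ^+ (j.+1 * q)).
  by exists (\sum_(t < q) 'X^(j.+1) ^+ t); rewrite (inv_one_sub_zzXn jq_gt0).
have zzj_neq1 : zz ^+ j.+1 != 1.
  by rewrite -subr_eq0 -opprB oppr_eq0 one_subzz_neq0.
have zzj_neq0 : zz ^+ j.+1 != 0 by rewrite expf_neq0 ?zz_neq0.
exists ((1 - 'X^(j.+1 * q)) - F).
rewrite NegzE -exprnN (invf_one_subV zzj_neq0 zzj_neq1) eF.
rewrite -{1}(divff (one_subzz_neq0 jq_gt0)) -mulrBl; congr (_ / _).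
by rewrite -rmorphXn -(rmorph1 tofracP) -!rmorphB.
Qed.

Lemma prod_inv_one_sub_zz (s : seq int) (N : nat) : (0 < N)%N ->
  all (fun i => i != 0) s -> {in s, forall i, (`|i| %| N)%N} ->
  exists F : {poly int}, \prod_(i <- s) (1 - zz ^ i)^-1 = tofracP F / (1 - zz ^+ N) ^+ size s.
Proof.
move=> N_gt0; elim: s => [|i s IHs] /=.
  by exists 1; rewrite big_nil rmorph1 expr0 divr1.
move=> /andP [i_neq0 s_neq0] s_dvdN; rewrite big_cons.
have [F1 ->] := inv_one_sub_zz i_neq0 N_gt0 (s_dvdN i (mem_head _ _)).
have [F ->] := IHs s_neq0 (sub_in1 (fun x x_s => mem_behead x_s) s_dvdN).
by exists (F1 * F); rewrite mulf_div rmorphM exprS.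
Qed.

Lemma kloc_normal_form f : kloc f ->
  exists (P : {poly int}) (m : int) (N K : nat),
    (0 < N)%N /\ f = tofracP P * zz ^ m / (1 - zz ^+ N) ^+ K.
Proof.
move=> [g [s [[G [m ->]] [s_neq0 ->]]]].
pose N := \prod_(i <- s) `|i|%N.
have N_gt0 : (0 < N)%N.
  by rewrite /N big_seq prodn_cond_gt0 // => i /(allP s_neq0); rewrite absz_gt0.
have s_dvdN : {in s, forall i, (`|i| %| N)%N}.
  by move=> i s_i; rewrite /N (big_rem i) //= dvdn_mulr.
have [F ->] := prod_inv_one_sub_zz N_gt0 s_neq0 s_dvdN.
exists (G * F), m, N, (size s); split=> //.
by rewrite mulrA [_ * zz ^ m * _]mulrAC -rmorphM.
Qed.

Lemma coef0_one_subXn_exp (N K : nat) : (0 < N)%N -> ((1 - 'X^N) ^+ K : {poly int})`_0 = 1.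
Proof.
move=> N_gt0; rewrite -horner_coef0 horner_exp !hornerE expr0n.
by rewrite eqn0Ngt N_gt0 subr0 expr1n.
Qed.

Lemma lead_coef_one_subXn_exp (N K : nat) : (0 < N)%N ->
  lead_coef ((1 - 'X^N) ^+ K : {poly int}) = (-1) ^+ K.
Proof. by move=> N_gt0; rewrite lead_coef_exp -opprB lead_coefN -polyC1 lead_coefXnsubC. Qed.

Lemma size_one_subXn_exp (N K : nat) : (0 < N)%N ->
  size ((1 - 'X^N) ^+ K : {poly int}) = (N * K).+1.
Proof.
move=> N_gt0; rewrite -[LHS]prednK ?size_exp; last first.
  by rewrite size_poly_gt0 expf_neq0 ?one_subXn_neq0.
by rewrite -opprB size_polyN -polyC1 size_XnsubC.
Qed.

Lemma rhoK_spec_kloc f : kloc f -> rhoK_spec f (rhoK f).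
Proof.
case/kloc_normal_form => P [m [N [K [N_gt0 ->]]]]; have [P' [k ->]] := laurent_frac P m.
pose D : {poly int} := (1 - 'X^N) ^+ K.
have D0_unit : D`_0 \is a GRing.unit by rewrite coef0_one_subXn_exp.
have lD_unit : lead_coef D \is a GRing.unit.
  by rewrite lead_coef_one_subXn_exp // unitrX ?unitrN1.
have [r fr] := rhoK_spec_exists P' k D0_unit lD_unit.
suff -> : tofracP P' / tofracP 'X^k / (1 - zz ^+ N) ^+ K =
          tofracP P' / tofracP ('X^k * D) by rewrite (rhoK_specE fr).
by rewrite -mulrA -invfM -rmorphXn -(rmorph1 tofracP) -rmorphB -rmorphXn -rmorphM.
Qed.

Lemma rhoK_add f g : kloc f -> kloc g -> rhoK (f + g) = rhoK f + rhoK g.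
Proof. by move=> kf kg; apply/rhoK_specE/rhoK_spec_add; apply: rhoK_spec_kloc. Qed.

Lemma rhoK_scale (c : int) f : kloc f -> rhoK (c%:~R * f) = c * rhoK f.
Proof. by move=> kf; apply/rhoK_specE/rhoK_spec_scale/rhoK_spec_kloc. Qed.

Lemma rhoK_laurent g : laurent_poly g -> rhoK g = 0.
Proof. by move=> lg; apply/rhoK_specE/rhoK_spec_laurent. Qed.

Lemma rhoK_residue_identities : residue_identities rhoK.
Proof.
move=> n k a n_gt0 lt_an; apply: rhoK_specE.
rewrite -!rmorphXn -(rmorph1 tofracP) -rmorphB -rmorphXn.
rewrite (_ : (if _ then 1 else 0) = ('X^(n * k + a))`_0); last first.
  rewrite coefXn (_ : (0 == n * k + a)%N = (k == 0%N) && (a == 0%N)).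
    by case: (_ && _).
  by rewrite eq_sym addn_eq0 muln_eq0 (negbTE (lt0n_neq0 n_gt0)).
apply: rhoK_spec_proper; rewrite ?coef0_one_subXn_exp //.
  by rewrite lead_coef_one_subXn_exp // unitrX ?unitrN1.
by rewrite size_polyXn size_one_subXn_exp // ltnS mulnS addnC ltn_add2r.
Qed.

Lemma periodic_const (T : Type) (D : int -> T) (N : nat) (c : int) (x : T) :
  (0 < N)%N -> (forall j, D (j + N%:Z) = D j) ->
  (forall a : nat, (a < N)%N -> D (c + a%:Z) = x) -> forall j, D j = x.
Proof.
move=> N_gt0 DN Dc j.
have Dq (i : int) (q : nat) : D (i + (q * N)%N%:Z) = D i.
  elim: q => [|q IHq]; first by rewrite addr0.
  by rewrite -[RHS]IHq -[RHS]DN; congr D; lia.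
pose r := ((j - c) %% N%:Z)%Z; pose q := ((j - c) %/ N%:Z)%Z.
have r_ge0 : 0 <= r by rewrite modz_ge0 // eqz_nat -lt0n.
have r_ltN : r < N%:Z by rewrite ltz_pmod // ltz_nat.
have j_eq : j = c + r + q * N%:Z.
  by rewrite addrAC -addrA /r /q -divz_eq addrC subrK.
rewrite -(Dc `|r|%N); last lia.
case: q j_eq => t j_eq.
  by rewrite j_eq (_ : _ + _ = c + `|r|%N%:Z + (t * N)%N%:Z) ?Dq //; lia.
by rewrite -(Dq j t.+1); congr D; lia.
Qed.

Lemma kloc_laurent_div L (N K : nat) : laurent_poly L -> (0 < N)%N ->
  kloc (L / (1 - zz ^+ N) ^+ K).
Proof.
move=> lL N_gt0; exists L, (nseq K N%:Z); split=> //; split.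
  by rewrite all_nseq eqz_nat -lt0n N_gt0 orbT.
by rewrite big_nseq iter_mulr_1 -exprnP exprVn.
Qed.

Lemma div_expS_split (K : fieldType) (w y : K) (n : nat) : y != 0 ->
  w / y ^+ n.+1 = w * (1 - y) / y ^+ n.+1 + w / y ^+ n.
Proof.
move=> y_neq0; have wyS : w * y / y ^+ n.+1 = w / y ^+ n.
  by rewrite exprS invfM mulrA (mulfK y_neq0).
by rewrite mulrBr mulr1 mulrBl wyS subrK.
Qed.

Section ResidueUniqueness.

Variable rho : ratfun -> int.
Hypothesis rho_add : forall f g, kloc f -> kloc g -> rho (f + g) = rho f + rho g.
Hypothesis rho_scale : forall (c : int) f, kloc f -> rho (c%:~R * f) = c * rho f.
Hypothesis rho_laurent : vanishes_on_laurent rho.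
Hypothesis rho_identities : forall n k a : nat, (0 < n)%N -> (a < n)%N ->
  rho (zz ^+ (n * k + a) / (1 - zz ^+ n) ^+ k.+1) = 0.

Lemma rho_monomial_eq0 (N K : nat) (j : int) : (0 < N)%N ->
  rho (zz ^ j / (1 - zz ^+ N) ^+ K) = 0.
Proof.
move=> N_gt0; have kloc_zz i K' := kloc_laurent_div K' (laurent_zz i) N_gt0.
elim: K j => [|K IHK] j.
  by rewrite expr0 divr1; apply/rho_laurent/laurent_zz.
pose D i := rho (zz ^ i / (1 - zz ^+ N) ^+ K.+1).
apply: (@periodic_const _ D N (N * K)%N%:Z 0 N_gt0) => [i | a lt_aN]; last first.
  by rewrite /D -PoszD -exprnP rho_identities.
rewrite /D [in RHS](div_expS_split _ _ (one_subzz_neq0 N_gt0)) subKr [zz ^+ N]exprnP.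
by rewrite -(expfzDr _ _ zz_neq0) rho_add ?(IHK i) ?addr0 //; apply: kloc_zz.
Qed.

Lemma rho_kloc_eq0 f : kloc f -> rho f = 0.
Proof.
case/kloc_normal_form => P [m [N [K [N_gt0 ->]]]].
elim/poly_ind: P m => [|P c IHP] m.
  rewrite rmorph0 !mul0r; apply: rho_laurent.
  by exists 0, 0; rewrite rmorph0 mul0r.
have -> : tofracP (P * 'X + c%:P) * zz ^ m / (1 - zz ^+ N) ^+ K =
          tofracP P * zz ^ (m + 1) / (1 - zz ^+ N) ^+ K +
          c%:~R * (zz ^ m / (1 - zz ^+ N) ^+ K).
  have -> : tofracP (P * 'X + c%:P) = tofracP P * zz + c%:~R.
    by rewrite -tofracP_int -rmorphM -rmorphD.
  by rewrite (expfzDr _ _ zz_neq0) expr1z; ring.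
have kloc_c : kloc (c%:~R * (zz ^ m / (1 - zz ^+ N) ^+ K)).
  rewrite mulrA; apply: kloc_laurent_div N_gt0.
  by exists c%:P, m; rewrite tofracP_int.
have kloc_P : kloc (tofracP P * zz ^ (m + 1) / (1 - zz ^+ N) ^+ K).
  by apply: kloc_laurent_div N_gt0; exists P, (m + 1).
rewrite rho_add // rho_scale; last exact: kloc_laurent_div (laurent_zz m) N_gt0.
have -> : rho (zz ^ m / (1 - zz ^+ N) ^+ K) = 0 by apply: rho_monomial_eq0.
by rewrite mulr0 addr0; apply: IHP.
Qed.

End ResidueUniqueness.

Lemma residue_map_unique (rho1 rho2 : ratfun -> int) :
  Zlinear_on_kloc rho1 -> vanishes_on_laurent rho1 -> residue_identities rho1 ->
  Zlinear_on_kloc rho2 -> vanishes_on_laurent rho2 -> residue_identities rho2 ->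
  forall f, kloc f -> rho1 f = rho2 f.
Proof.
move=> [add1 scale1] lau1 id1 [add2 scale2] lau2 id2 f kf.
apply/eqP; rewrite -subr_eq0; apply/eqP.
apply: (@rho_kloc_eq0 (fun f => rho1 f - rho2 f)) kf.
- by move=> g h kg kh; rewrite add1 // add2 // opprD addrACA.
- by move=> c g kg; rewrite scale1 // scale2 // mulrBr.
- by move=> g lg; rewrite lau1 // lau2 // subrr.
- by move=> n k a n_gt0 lt_an; rewrite id1 // id2 // subrr.
Qed.

Theorem propositionA1 :
  (forall f, kloc f -> rhoK_spec f (rhoK f)) /\
  Zlinear_on_kloc rhoK /\
  vanishes_on_laurent rhoK /\
  residue_identities rhoK /\
  (forall rho : ratfun -> int,
     Zlinear_on_kloc rho -> vanishes_on_laurent rho -> residue_identities rho ->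
     forall f, kloc f -> rho f = rhoK f).
Proof.
have rhoK_linear : Zlinear_on_kloc rhoK by split; [exact: rhoK_add | exact: rhoK_scale].
split; first exact: rhoK_spec_kloc.
split; first exact: rhoK_linear.
split; first exact: rhoK_laurent.
split; first exact: rhoK_residue_identities.
move=> rho rho_linear rho_laurent rho_identities.
exact: residue_map_unique rho_linear rho_laurent rho_identities
  rhoK_linear rhoK_laurent rhoK_residue_identities.
Qed.
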